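(* Let $\Psi=\begin{bmatrix}\Psi_{11}&\Psi_{12}\\ \Psi_{12}^\top&\Psi_{22}\end{bmatrix}\in\mathbb{R}^{(p+q)\times(p+q)}$ be symmetric with $\Psi_{11}\in\mathbb{R}^{p\times p}$, such that $\Psi_{11}-\Psi_{12}\Psi_{22}^{-1}\Psi_{12}^\top>0$ and $\Psi_{22}<0$. Let $W\in\mathbb{R}^{p\times r}$ be a full rank matrix with $r\le p$. Suppose $Z_W\in\mathbb{R}^{r\times q}$ satisfies $$\begin{bmatrix}I\\Z_W^\top\end{bmatrix}^\top\begin{bmatrix}W^\top\Psi_{11}W&W^\top\Psi_{12}\\ \Psi_{12}^\top W&\Psi_{22}\end{bmatrix}\begin{bmatrix}I\\Z_W^\top\end{bmatrix}\ge0.$$ Then there exists $Z\in\mathbb{R}^{p\times q}$ such that $Z^\top W=Z_W^\top$ and $$\begin{bmatrix}I\\Z^\top\end{bmatrix}^\top\Psi\begin{bmatrix}I\\Z^\top\end{bmatrix}\ge0.$$ *)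

From mathcomp Require Import all_boot all_order all_algebra.
Set Implicit Arguments. Unset Strict Implicit. Unset Printing Implicit Defensive.
Import Order.TTheory GRing.Theory Num.Theory.
Local Open Scope ring_scope.

Definition psdmx (R : realFieldType) (n : nat) (A : 'M[R]_n) : Prop :=
  forall x : 'cV[R]_n, 0 <= (x^T *m A *m x) 0 0.

Definition pdmx (R : realFieldType) (n : nat) (A : 'M[R]_n) : Prop :=
  forall x : 'cV[R]_n, x != 0 -> 0 < (x^T *m A *m x) 0 0.

Definition ndmx (R : realFieldType) (n : nat) (A : 'M[R]_n) : Prop :=
  pdmx (- A).

(* Let S = Psi11 - Psi12 Psi22^-1 Psi12^T be the Schur complement. Completing the
   square, the quadratic constraint on Z reads S + D Psi22 D^T >= 0 with
   D = Z + Psi12 Psi22^-1, and the one on Z_W reads W^T S W + E Psi22 E^T >= 0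
   with E = Z_W + W^T Psi12 Psi22^-1. Take D = S W (W^T S W)^-1 E, so that
   W^T D = E. For any x, put y = (W^T S W)^-1 W^T S x: then D^T x = E^T y, and
   W y is the S-orthogonal projection of x onto the range of W, whence
   x^T S x >= y^T W^T S W y and the reduced inequality at y gives the full one at x. *)
From mathcomp Require Import all_boot all_order all_algebra.
From mathcomp Require Import lra.
Set Implicit Arguments. Unset Strict Implicit. Unset Printing Implicit Defensive.
Import Order.TTheory GRing.Theory Num.Theory.
Local Open Scope ring_scope.

Section QuadraticForms.
Variable R : realFieldType.

Definition qform n (A : 'M[R]_n) (x : 'cV[R]_n) : R := (x^T *m A *m x) 0 0.

Lemma qformD n (A B : 'M[R]_n) (x : 'cV[R]_n) :
  qform (A + B) x = qform A x + qform B x.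
Proof. by rewrite /qform mulmxDr mulmxDl mxE. Qed.

Lemma qform_mulmx m n (B : 'M[R]_(m, n)) (N : 'M[R]_m) (x : 'cV[R]_n) :
  qform (B^T *m N *m B) x = qform N (B *m x).
Proof. by rewrite /qform trmx_mul !mulmxA. Qed.

Lemma qform_mulmx_tr m n (B : 'M[R]_(n, m)) (N : 'M[R]_m) (x : 'cV[R]_n) :
  qform (B *m N *m B^T) x = qform N (B^T *m x).
Proof. by rewrite -qform_mulmx trmxK. Qed.

Lemma pdmx_psdmx n (A : 'M[R]_n) : pdmx A -> psdmx A.
Proof.
move=> pdA x; have [->|nz_x] := eqVneq x 0; last exact/ltW/pdA.
by rewrite trmx0 !mul0mx mxE.
Qed.

Lemma pdmx_unitmx n (A : 'M[R]_n) : pdmx A -> A \in unitmx.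
Proof.
move=> pdA; rewrite -row_free_unit; apply: inj_row_free => u uA0.
apply/eqP; apply: contraT => nz_u.
by have := pdA u^T; rewrite trmx_eq0 trmxK uA0 mul0mx mxE ltxx => /(_ nz_u).
Qed.

Lemma ndmx_unitmx n (A : 'M[R]_n) : ndmx A -> A \in unitmx.
Proof.
by move=> /pdmx_unitmx; rewrite -!row_free_unit /row_free mxrank_opp.
Qed.

Lemma pdmx_congr p r (S : 'M[R]_p) (W : 'M[R]_(p, r)) :
  pdmx S -> \rank W = r -> pdmx (W^T *m S *m W).
Proof.
move=> pdS rkW y nz_y; change (0 < qform (W^T *m S *m W) y).
have freeWT : row_free W^T by rewrite /row_free mxrank_tr rkW.
have nz_Wy : W *m y != 0 by rewrite -trmx_eq0 trmx_mul mulmx_free_eq0 // trmx_eq0.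
by rewrite qform_mulmx; apply: pdS.
Qed.

Lemma qform_orth_le n (S : 'M[R]_n) (x v : 'cV[R]_n) :
  S^T = S -> psdmx S -> v^T *m S *m (x - v) = 0 -> qform S v <= qform S x.
Proof.
move=> sS psdS orth; set w := x - v in orth *.
have -> : x = v + w by rewrite addrC subrK.
have orth' : w^T *m S *m v = 0.
  by apply: trmx_inj; rewrite !trmx_mul trmxK sS mulmxA orth trmx0.
clearbody w; rewrite /qform !raddfD /= !mulmxDl orth orth' addr0 add0r.
by rewrite [leRHS]mxE lerDl; apply: psdS.
Qed.

Lemma graph_form_schur n m (A : 'M[R]_n) (B : 'M[R]_(n, m)) (N : 'M[R]_m)
    (X : 'M[R]_(m, n)) :
  N^T = N -> N \in unitmx ->
  (col_mx 1%:M X)^T *m block_mx A B B^T N *m col_mx 1%:M X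
  = (A - B *m invmx N *m B^T)
    + (X^T + B *m invmx N) *m N *m (X^T + B *m invmx N)^T.
Proof.
move=> sN uN; set C := B *m invmx N.
have CN : C *m N = B by rewrite mulmxKV.
have CT : C^T = invmx N *m B^T by rewrite trmx_mul trmx_inv sN.
have NCT : N *m C^T = B^T by rewrite CT mulKVmx.
rewrite tr_col_mx trmx1 mul_row_block !mul1mx mul_row_col !mulmx1.
rewrite raddfD /= trmxK !mulmxDl CN -!mulmxA !mulmxDr NCT CT.
rewrite [in RHS](addrC (B *m X)) [RHS]addrACA addKr -!addrA.
by congr (A + _); rewrite [RHS]addrC -addrA.
Qed.

Lemma psdmx_lift p r q (S : 'M[R]_p) (W : 'M[R]_(p, r)) (E : 'M[R]_(r, q))
    (N : 'M[R]_q) :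
  S^T = S -> psdmx S -> W^T *m S *m W \in unitmx ->
  psdmx (W^T *m S *m W + E *m N *m E^T) ->
  exists2 D : 'M[R]_(p, q), W^T *m D = E & psdmx (S + D *m N *m D^T).
Proof.
move=> sS psdS; set M := W^T *m S *m W => uM psdME.
have sM : M^T = M by rewrite /M !trmx_mul sS trmxK mulmxA.
exists (S *m W *m invmx M *m E); first by rewrite !mulmxA -/M mulmxV ?mul1mx.
move=> x; set y := invmx M *m (W^T *m S *m x).
have normal_eq : W^T *m S *m (W *m y) = W^T *m S *m x.
  by rewrite mulmxA /y mulKVmx.
have orth : (W *m y)^T *m S *m (x - W *m y) = 0.
  rewrite trmx_mul -!mulmxA [W^T *m _]mulmxA mulmxBr normal_eq.
  by rewrite subrr mulmx0.
have Dx : (S *m W *m invmx M *m E)^T *m x = E^T *m y.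
  by rewrite /y !trmx_mul trmx_inv sM sS !mulmxA.
have psdMEy : 0 <= qform (M + E *m N *m E^T) y := psdME y.
have projS := qform_orth_le sS psdS orth.
rewrite -[leRHS]/(qform _ x) !qformD !qform_mulmx_tr Dx.
rewrite qformD qform_mulmx_tr /M qform_mulmx in psdMEy.
lra.
Qed.

End QuadraticForms.

Theorem lemmaA4 (R : realFieldType) (p q r : nat)
  (Psi11 : 'M[R]_p) (Psi12 : 'M[R]_(p, q)) (Psi22 : 'M[R]_q)
  (W : 'M[R]_(p, r)) (ZW : 'M[R]_(r, q)) :
  Psi11^T = Psi11 -> Psi22^T = Psi22 ->
  pdmx (Psi11 - Psi12 *m invmx Psi22 *m Psi12^T) ->
  ndmx Psi22 ->
  (r <= p)%N -> \rank W = r ->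
  psdmx ((col_mx (1%:M : 'M[R]_r) ZW^T)^T
           *m block_mx (W^T *m Psi11 *m W) (W^T *m Psi12) (Psi12^T *m W) Psi22
           *m col_mx (1%:M : 'M[R]_r) ZW^T) ->
  exists Z : 'M[R]_(p, q),
    Z^T *m W = ZW^T /\
    psdmx ((col_mx (1%:M : 'M[R]_p) Z^T)^T
             *m block_mx Psi11 Psi12 Psi12^T Psi22
             *m col_mx (1%:M : 'M[R]_p) Z^T).
Proof.
move=> s11 s22 pdS nd22 _ rkW psdZW.
have u22 := ndmx_unitmx nd22.
set S := Psi11 - _ in pdS.
have sS : S^T = S by rewrite /S raddfB /= s11 !trmx_mul trmxK trmx_inv s22 mulmxA.
have uM := pdmx_unitmx (pdmx_congr pdS rkW).
have schurW : W^T *m Psi11 *m W - W^T *m Psi12 *m invmx Psi22 *m (W^T *m Psi12)^T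
              = W^T *m S *m W.
  by rewrite /S mulmxBr mulmxBl trmx_mul trmxK !mulmxA.
have trW12 : Psi12^T *m W = (W^T *m Psi12)^T by rewrite trmx_mul trmxK.
rewrite trW12 graph_form_schur // trmxK schurW in psdZW.
have [D WD psdD] := psdmx_lift sS (pdmx_psdmx pdS) uM psdZW.
exists (D - Psi12 *m invmx Psi22); split.
  by apply: trmx_inj; rewrite trmx_mul !trmxK mulmxBr WD mulmxA addrK.
by rewrite graph_form_schur // trmxK subrK.
Qed.
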